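(* Let $n,t\ge1$, $q\ge 2$, $b\ge1$ and $\boldsymbol{x}=x_1\cdots x_n\in\Sigma_q^n$. Then $\mathcal{I}_{t,b}(\boldsymbol{x})$ is the disjoint union $\bigsqcup_{\alpha\in\Sigma_q}\mathcal{I}_{t,b}(\boldsymbol{x})^{\alpha}$, where \[ \mathcal{I}_{t,b}(\boldsymbol{x})^{x_1}=x_1\circ\mathcal{I}_{t,b}(x_2\cdots x_n),\qquad \mathcal{I}_{t,b}(\boldsymbol{x})^{\alpha}=\alpha\circ\Sigma_q^{b-1}\circ\mathcal{I}_{t-1,b}(\boldsymbol{x})\ \text{ for }\alpha\in\Sigma_q\setminus\{x_1\}. \]
   Context: $\Sigma_q=\{0,\ldots,q-1\}$. A $b$-burst-insertion at position $i\in[1,n+1]$ transforms $x_1\cdots x_n$ into $x_1\cdots x_{i-1}y_1\cdots y_b x_i\cdots x_n$ for arbitrary $y_1\cdots y_b\in\Sigma_q^b$. $\mathcal{I}_{t,b}(\boldsymbol{x})$ is the set of all length-$(n+tb)$ sequences obtainable from $\boldsymbol{x}$ by $t$ successive $b$-burst-insertions ($\mathcal{I}_{0,b}(\boldsymbol{x})=\{\boldsymbol{x}\}$; for the empty sequence, $\mathcal{I}_{t,b}=\Sigma_q^{tb}$). For a set $\mathcal{S}$ of sequences, $\mathcal{S}^{\boldsymbol{u}}$ is the set of sequences in $\mathcal{S}$ starting with $\boldsymbol{u}$; $\circ$ denotes concatenation, extended to sets elementwise. *)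

From mathcomp Require Import all_boot.
Set Implicit Arguments. Unset Strict Implicit. Unset Printing Implicit Defensive.

(* A b-burst-insertion at position i
   (1 <= i <= n+1) inserts y (|y| = b) after the first i-1 symbols; below the
   nat [i] is the number of symbols kept before the burst (i.e. i-1). *)
Definition burst_ins (T : Type) (i : nat) (y w : seq T) : seq T :=
  take i w ++ y ++ drop i w.

Fixpoint Ins (T : Type) (b t : nat) (x : seq T) : seq T -> Prop :=
  match t with
  | 0 => fun z => z = x
  | t'.+1 => fun z => exists w, Ins b t' x w /\
       exists i y, i <= size w /\ size y = b /\ z = burst_ins i y w
  end.

Definition starting_with (T : Type) (S : seq T -> Prop) (u : seq T) : seq T -> Prop :=
  fun z => S z /\ exists v, z = u ++ v.

(* Burst-insertions can be reordered freely, so the sequences obtained from x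
   by k of them are exactly x with a gap before each letter and after the last,
   every gap of length a multiple of b and the gaps of total length k*b.  If
   such a sequence starts with x_1, either the first gap is empty or it starts
   with x_1 and can be moved past x_1.  Otherwise the first gap is nonempty and
   its first b letters form a burst that can be taken to be inserted last, at
   the front. *)

From mathcomp Require Import all_boot.
From mathcomp Require Import zify.
Set Implicit Arguments.
Unset Strict Implicit.

Lemma starting_with1 (T : Type) (S : seq T -> Prop) (a : T) (z : seq T) :
  starting_with S [:: a] z <-> exists v, S (a :: v) /\ z = a :: v.
Proof.
split=> [[Sz [v /= Ez]]|[v [Sv ->]]]; first by exists v; rewrite -Ez.
by split=> //; exists v.
Qed.

Section BurstInsertions.
Variables (T : Type) (b : nat).

Fixpoint spread (k : nat) (x z : seq T) : Prop :=
  match x with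
  | [::] => size z = k * b
  | c :: xs => exists j g r,
      [/\ z = g ++ c :: r, size g = j * b, j <= k & spread (k - j) xs r]
  end.

Lemma size_Ins k (x z : seq T) : Ins b k x z -> size z = size x + k * b.
Proof.
elim: k z => [|k IH] z /=; first by move=> ->; rewrite mul0n addn0.
move=> [w [/IH size_w [i [y [_ [size_y ->]]]]]].
rewrite /burst_ins !size_cat size_take size_drop size_y size_w mulSn.
by case: ltnP; lia.
Qed.

Lemma Ins_cons k (c : T) (xs w : seq T) : Ins b k xs w -> Ins b k (c :: xs) (c :: w).
Proof.
elim: k w => [|k IH] w /=; first by move=> ->.
move=> [w' [/IH Iw' [i [y [le_i [size_y ->]]]]]].
by exists (c :: w'); split=> //; exists i.+1, y.
Qed.

Lemma Ins_catl j k (x z g : seq T) :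
  size g = j * b -> Ins b k x z -> Ins b (j + k) x (g ++ z).
Proof.
elim: j g => [|j IH] g size_g Iz; first by case: g size_g.
have le_b : b <= size g by rewrite size_g mulSn leq_addr.
exists (drop b g ++ z); split.
  by apply: IH => //; rewrite size_drop size_g mulSn addKn.
exists 0, (take b g); split=> //; split; first by rewrite size_take_min; lia.
by rewrite /burst_ins take0 drop0 /= catA cat_take_drop.
Qed.

Lemma spread_Ins k (x z : seq T) : spread k x z -> Ins b k x z.
Proof.
elim: x k z => [|c xs IH] k z /=.
  by move=> size_z; rewrite -(addn0 k) -(cats0 z); apply: Ins_catl.
move=> [j [g [r [-> size_g le_jk Sr]]]].
rewrite -(subnKC le_jk); apply: Ins_catl => //.
by apply: Ins_cons; apply: IH.
Qed.

Lemma spread0 (x : seq T) : spread 0 x x.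
Proof. by elim: x => [|c xs IH] //=; exists 0, [::], xs. Qed.

Lemma spread_burst_ins k (x w y : seq T) i :
  size y = b -> i <= size w -> spread k x w -> spread k.+1 x (burst_ins i y w).
Proof.
move=> size_y; elim: x k w i => [|c xs IH] k w i /=.
  move=> le_i size_w; rewrite /burst_ins !size_cat size_take size_drop.
  by rewrite size_y size_w mulSn; case: ltnP; lia.
move=> le_i [j [g [r [Ew size_g le_jk Sr]]]]; rewrite {}Ew in le_i *.
have [le_ig|lt_gi] := leqP i (size g).
  exists j.+1, (take i g ++ y ++ drop i g), r; split=> //.
  - rewrite /burst_ins take_cat drop_cat ltn_neqAle le_ig andbT.
    by case: eqP => [->|_]; rewrite ?take_size ?drop_size ?subnn ?take0 ?drop0 ?cats0 -?catA.
  - rewrite !size_cat size_take size_drop size_y size_g mulSn.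
    by case: ltnP; lia.
have [i' Ei] : exists i', i = size g + i'.+1 by exists (i - size g).-1; lia.
rewrite size_cat /= Ei in le_i.
exists j, g, (burst_ins i' y r); split.
- by rewrite /burst_ins Ei take_cat drop_cat ltnNge leq_addr /= addKn -catA.
- exact: size_g.
- lia.
- by rewrite subSn //; apply: IH => //; lia.
Qed.

Lemma Ins_spread k (x z : seq T) : Ins b k x z -> spread k x z.
Proof.
elim: k z => [|k IH] z /=; first by move=> ->; apply: spread0.
by move=> [w [/IH Sw [i [y [le_i [size_y ->]]]]]]; apply: spread_burst_ins.
Qed.

Lemma spread_catl j k (x r h : seq T) :
  size h = j * b -> spread k x r -> spread (k + j) x (h ++ r).
Proof.
case: x => [|c xs] /= size_h.
  by move=> size_r; rewrite size_cat size_r size_h mulnDl addnC.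
move=> [i [g [r' [-> size_g le_ik Sr']]]].
exists (j + i), (h ++ g), r'; split.
- by rewrite catA.
- by rewrite size_cat size_h size_g mulnDl.
- lia.
- by rewrite (_ : k + j - (j + i) = k - i) //; lia.
Qed.

Hypothesis b_gt0 : 0 < b.

Lemma Ins_cons_eq k (c : T) (xs v : seq T) :
  Ins b k (c :: xs) (c :: v) <-> Ins b k xs v.
Proof.
split; last exact: Ins_cons.
move=> /Ins_spread [j [[|c' g] [r [/= Ez size_g le_jk Sr]]]].
  have j0 : j = 0 by move/esym/eqP: size_g; rewrite muln_eq0 => /orP[/eqP|]; lia.
  by case: Ez => ->; apply: spread_Ins; rewrite j0 subn0 in Sr.
case: Ez => -> ->.
(* the first gap starts with x_1 and is moved past it *)
apply: spread_Ins; rewrite -cat_rcons -(subnK le_jk).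
by apply: spread_catl => //; rewrite size_rcons -size_g.
Qed.

Lemma Ins_cons_neq k (a c : T) (xs v : seq T) : a <> c -> 0 < k ->
  Ins b k (c :: xs) (a :: v) <->
  exists u w, size u = b.-1 /\ Ins b k.-1 (c :: xs) w /\ v = u ++ w.
Proof.
move=> neq_ac k_gt0; split; last first.
  move=> [u [w [size_u [Iw ->]]]]; rewrite -(prednK k_gt0) -add1n.
  by apply: (Ins_catl (g := a :: u)) => //=; rewrite size_u mul1n prednK.
move=> /Ins_spread [j [[|a' g] [r [/= Ez size_g le_jk Sr]]]].
  by case: Ez => /neq_ac.
case: Ez => _ ->.
have j_gt0 : 0 < j by case: j size_g {le_jk Sr}.
have {}size_g : size g = j.-1 * b + b.-1.
  by case: j j_gt0 size_g {le_jk Sr} => // j _ /=; rewrite mulSn; lia.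
exists (take b.-1 g), (drop b.-1 g ++ c :: r); split; last split.
- by rewrite size_take_min size_g; apply/minn_idPl; apply: leq_addl.
- apply: spread_Ins; exists j.-1, (drop b.-1 g), r; split=> //.
  + by rewrite size_drop size_g addnK.
  + lia.
  + by rewrite (_ : k.-1 - j.-1 = k - j) //; lia.
- by rewrite catA cat_take_drop.
Qed.

End BurstInsertions.

Theorem claim1 (q n t b : nat) (x : seq 'I_q) :
  1 <= n -> 1 <= t -> 2 <= q -> 1 <= b -> size x = n ->
  (* disjoint union over alpha of the pieces I(x)^alpha *)
  (forall z, Ins b t x z <-> exists a : 'I_q, starting_with (Ins b t x) [:: a] z) /\
  (forall (a a' : 'I_q) z, starting_with (Ins b t x) [:: a] z ->
       starting_with (Ins b t x) [:: a'] z -> a = a') /\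
  (* the piece for alpha = x_1 *)
  (forall (x1 : 'I_q) xs, x = x1 :: xs ->
     forall z, starting_with (Ins b t x) [:: x1] z <->
               exists w, Ins b t xs w /\ z = x1 :: w) /\
  (* the pieces for alpha <> x_1 *)
  (forall (x1 : 'I_q) xs, x = x1 :: xs ->
     forall (a : 'I_q), a != x1 ->
     forall z, starting_with (Ins b t x) [:: a] z <->
               exists u w, size u = b - 1 /\ Ins b (t - 1) x w /\ z = a :: u ++ w).
Proof.
move=> n_gt0 t_gt0 _ b_gt0 size_x; split; [|split; [|split]].
- move=> z; split=> [Iz|[a []] //].
  case: z Iz (size_Ins Iz) => [|a v] Iz size_z.
    by exfalso; rewrite size_x /= in size_z; lia.
  by exists a; split=> //; exists v.
- by move=> a a' z [_ [v ->]] [_ [v' [->]]].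
- move=> x1 xs -> z; rewrite starting_with1.
  split=> [[w [/(Ins_cons_eq b_gt0) Iw ->]]|[w [Iw ->]]]; exists w => //.
  by split=> //; apply/(Ins_cons_eq b_gt0).
- move=> x1 xs -> a /eqP neq_a z; rewrite starting_with1 !subn1.
  split=> [[v [Iv ->]]|[u [w [size_u [Iw ->]]]]].
    have [u [w [size_u [Iw ->]]]] := (Ins_cons_neq b_gt0 xs v neq_a t_gt0).1 Iv.
    by exists u, w.
  exists (u ++ w); split=> //.
  by apply/(Ins_cons_neq b_gt0 xs _ neq_a t_gt0); exists u, w.
Qed.
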